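(* Let $C$ be a localic category. Then the monad $\Gamma C$ of global sections is hyperaffine-unary.
   Context: A monad $T$ on $\mathbf{Set}$: sets $TA$, $\mathrm{return}\,a\in TA$, $\mathbin{\gg\!=}\colon TA\times(TB)^A\to TB$ with the monad laws; $t\gg s:=t\mathbin{\gg\!=}\lambda a.s$. An element $h\in TA$ is hyperaffine if $h\mathbin{\gg\!=}\lambda a.\mathrm{return}\,b=\mathrm{return}\,b$ for every set $B$ and $b\in B$, and $h\mathbin{\gg\!=}\lambda a_1.\,h\mathbin{\gg\!=}\lambda a_2.\mathrm{return}(a_1,a_2)=h\mathbin{\gg\!=}\lambda a.\mathrm{return}(a,a)$. $T$ is hyperaffine-unary if for every set $A$ and $t\in TA$ there is a unique hyperaffine $\bar t\in TA$ with $t=\bar t\mathbin{\gg\!=}\lambda a.(t\gg\mathrm{return}\,a)$. A localic category $C$ is an internal category in $\mathbf{Loc}$ (the opposite of the category of frames) with $C_0,C_1,\sigma,\tau,\iota,\mu$. $A\cdot L$ denotes the $A$-fold coproduct of locales (frame $\mathcal{O}(L)^A$), with injections $\upsilon_a$ and codiagonal $\nabla$. $\Gamma C(A)$ is the set of locale maps $s\colon C_0\to A\cdot C_1$ with $\sigma\circ\nabla\circ s=\mathrm{id}$; it is a monad with $\mathrm{return}\,a=\upsilon_a\circ\iota$ and $s\mathbin{\gg\!=}u$ the composite $C_0\xrightarrow{s}A\cdot C_1\to C_1\times_{C_0}(B\cdot C_1)\cong B\cdot(C_1\times_{C_0}C_1)\xrightarrow{B\cdot\mu}B\cdot C_1$,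 the middle map having components $\nabla$ and $[u(a)]_a\circ(A\cdot\tau)$ (in generalized elements: $c\mapsto(b,g\circ f)$ where $s(c)=(a,f)$ and $u(a)(\tau f)=(b,g)$). *)

(* Localic categories, presented via frames (Loc = Frm^op).
   A locale map f : X -> Y is represented by its frame homomorphism
   f^* : O(Y) -> O(X). *)
Set Implicit Arguments.
Unset Strict Implicit.

Record Frame := {
  fcar :> Type;
  fle : fcar -> fcar -> Prop;
  ftop : fcar;
  fmeet : fcar -> fcar -> fcar;
  fsup : (fcar -> Prop) -> fcar;
  fle_refl : forall x, fle x x;
  fle_trans : forall x y z, fle x y -> fle y z -> fle x z;
  fle_antisym : forall x y, fle x y -> fle y x -> x = y;
  ftop_max : forall x, fle x ftop;
  fmeet_glb : forall x y z, fle z (fmeet x y) <-> (fle z x /\ fle z y);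
  fsup_lub : forall (S : fcar -> Prop) z, fle (fsup S) z <-> (forall x, S x -> fle x z);
  fdistr : forall x (S : fcar -> Prop),
      fmeet x (fsup S) = fsup (fun z => exists s, S s /\ z = fmeet x s)
}.
Arguments fle {f}. Arguments ftop {f}. Arguments fmeet {f}. Arguments fsup {f}.

Definition img (X Y : Type) (f : X -> Y) (S : X -> Prop) : Y -> Prop :=
  fun y => exists x, S x /\ y = f x.

Definition is_frame_hom (L M : Frame) (f : L -> M) : Prop :=
  f ftop = ftop /\
  (forall x y, f (fmeet x y) = fmeet (f x) (f y)) /\
  (forall S : L -> Prop, f (fsup S) = fsup (img f S)).

(* ---------- Copowers A . L : frame O(L)^A (pointwise) ---------- *)
Definition ptop (A : Type) (L : Frame) : A -> L := fun _ => ftop.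
Definition pmeet (A : Type) (L : Frame) (V W : A -> L) : A -> L :=
  fun a => fmeet (V a) (W a).
Definition psup (A : Type) (L : Frame) (S : (A -> L) -> Prop) : A -> L :=
  fun a => fsup (fun y => exists V, S V /\ y = V a).

(* frame homomorphism O(L)^A -> O(M), i.e. locale map M -> A . L *)
Definition is_frame_hom_pow (A : Type) (L M : Frame) (s : (A -> L) -> M) : Prop :=
  s (@ptop A L) = ftop /\
  (forall V W, s (@pmeet A L V W) = fmeet (s V) (s W)) /\
  (forall S : (A -> L) -> Prop, s (@psup A L S) = fsup (img s S)).

(* ---------- Pullbacks of locales:  Y x_Z Y' via C-ideals ----------
   For locale maps g : Y -> Z (frame map gs : Z -> Y) and h : Y' -> Z
   (frame map hs : Z -> Y'), the frame O(Y x_Z Y') is the frame of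
   C-ideals D of O(Y) x O(Y') (pushout of frames, Picado-Pultr):
   downsets closed under joins in each variable and saturated for the
   relation  gs w (x) 1 ~ 1 (x) hs w.  The generator x (x) y corresponds
   to pi1^* x /\ pi2^* y, and x (x) y <= D iff D x y. *)
Definition Cideal (Z Y Y' : Frame) (gs : Z -> Y) (hs : Z -> Y')
    (D : Y -> Y' -> Prop) : Prop :=
  (forall x y x' y', D x y -> fle x' x -> fle y' y -> D x' y') /\
  (forall (S : Y -> Prop) y, (forall x, S x -> D x y) -> D (fsup S) y) /\
  (forall x (S : Y' -> Prop), (forall y, S y -> D x y) -> D x (fsup S)) /\
  (forall x y w, D (fmeet x (gs w)) y <-> D x (fmeet (hs w) y)).

Definition cgen (Z Y Y' : Frame) (gs : Z -> Y) (hs : Z -> Y')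
    (P : Y -> Y' -> Prop) : Y -> Y' -> Prop :=
  fun x y => forall D, Cideal gs hs D -> (forall a b, P a b -> D a b) -> D x y.

Definition proj1F (Z Y Y' : Frame) (gs : Z -> Y) (hs : Z -> Y') (x : Y) :=
  cgen gs hs (fun a b => a = x /\ b = ftop).
Definition proj2F (Z Y Y' : Frame) (gs : Z -> Y) (hs : Z -> Y') (y : Y') :=
  cgen gs hs (fun a b => a = ftop /\ b = y).

Definition pairF (X Y Y' : Frame) (ps : Y -> X) (qs : Y' -> X)
    (D : Y -> Y' -> Prop) : X :=
  fsup (fun z => exists x y, D x y /\ z = fmeet (ps x) (qs y)).

(* ---------- Localic categories ----------
   C1 x_{C0} C1 is the pullback of  tau (left)  and  sigma (right):
   a generalized element is a pair (f, g) with tau f = sigma g, and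
   mu (f, g) = g o f. *)
Record LocCat := {
  C0 : Frame;
  C1 : Frame;
  sigma : C0 -> C1;
  tau : C0 -> C1;
  iota : C1 -> C0;
  mu : C1 -> (C1 -> C1 -> Prop);    (* mu^* : O(C1) -> O(C1 x_{C0} C1) *)
  sigma_hom : is_frame_hom sigma;
  tau_hom : is_frame_hom tau;
  iota_hom : is_frame_hom iota;
  mu_Cideal : forall v, Cideal tau sigma (mu v);
  mu_top : forall a b, mu ftop a b;
  mu_meet : forall v w a b, mu (fmeet v w) a b <-> (mu v a b /\ mu w a b);
  mu_sup : forall (S : C1 -> Prop) a b,
      mu (fsup S) a b <-> cgen tau sigma (fun x y => exists v, S v /\ mu v x y) a b;
  sigma_iota : forall w, iota (sigma w) = w;
  tau_iota : forall w, iota (tau w) = w;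
  (* sigma o mu = sigma o pi1,  tau o mu = tau o pi2 *)
  sigma_mu : forall w a b, mu (sigma w) a b <-> proj1F tau sigma (sigma w) a b;
  tau_mu : forall w a b, mu (tau w) a b <-> proj2F tau sigma (tau w) a b;
  (* unit laws: mu o <iota o sigma, id> = id,  mu o <id, iota o tau> = id *)
  unit_left : forall v,
      pairF (fun x => sigma (iota x)) (fun y => y) (mu v) = v;
  unit_right : forall v,
      pairF (fun x => x) (fun y => tau (iota y)) (mu v) = v;
  (* associativity, in terms of generalized elements X -> C1 *)
  assoc : forall (X : Frame) (ps qs rs : C1 -> X),
      is_frame_hom ps -> is_frame_hom qs -> is_frame_hom rs ->
      (forall w, ps (tau w) = qs (sigma w)) ->
      (forall w, qs (tau w) = rs (sigma w)) ->
      forall v,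
        pairF (fun x => pairF ps qs (mu x)) rs (mu v)
        = pairF ps (fun y => pairF qs rs (mu y)) (mu v)
}.

Arguments C0 : clear implicits. Arguments C1 : clear implicits.
Arguments sigma : clear implicits. Arguments tau : clear implicits.
Arguments iota : clear implicits. Arguments mu : clear implicits.

Section Gamma.
Variable C : LocCat.

(* a (raw) locale map C0 -> A . C1, via its frame map O(C1)^A -> O(C0) *)
Definition Sec (A : Type) := (A -> C1 C) -> C0 C.

(* s in Gamma C (A):  s is a locale map with  sigma o nabla o s = id *)
Definition inGamma (A : Type) (s : Sec A) : Prop :=
  is_frame_hom_pow s /\ forall w, s (fun _ => sigma C w) = w.

(* return a = upsilon_a o iota *)
Definition ret (A : Type) (a : A) : Sec A := fun V => iota C (V a).

(* s >>= u is the composite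
     C0 --s--> A.C1 --<nabla, [u a]_a o (A.tau)>--> C1 x_{C0} (B.C1)
        --(iso)--> B.(C1 x_{C0} C1) --B.mu--> B.C1.
   Frame maps:
   - B.mu :  V |-> (b |-> mu (V b))
   - the canonical iso  B.(C1 x_{C0} C1) ~ C1 x_{C0} (B.C1)  sends the
     family of C-ideals W to the C-ideal  {(x,Y) | forall b, W b x (Y b)}
   - the pairing <nabla, [u a]_a o (A.tau)> sends a C-ideal E to
     a |-> \/ { x /\ tau (u a Y) | E x Y }. *)
Definition Bmu (B : Type) (V : B -> C1 C) : B -> (C1 C -> C1 C -> Prop) :=
  fun b => mu C (V b).
Definition isoF (B : Type) (W : B -> (C1 C -> C1 C -> Prop))
  : C1 C -> (B -> C1 C) -> Prop :=
  fun x Y => forall b, W b x (Y b).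
Definition midF (A B : Type) (u : A -> Sec B) (E : C1 C -> (B -> C1 C) -> Prop)
  : A -> C1 C :=
  fun a => fsup (fun z => exists x Y, E x Y /\ z = fmeet x (tau C (u a Y))).
Definition bind (A B : Type) (s : Sec A) (u : A -> Sec B) : Sec B :=
  fun V => s (midF u (isoF (Bmu V))).

Definition then_ (A B : Type) (t : Sec A) (s : Sec B) : Sec B :=
  bind t (fun _ => s).

Definition sec_eq (A : Type) (s t : Sec A) : Prop := forall V, s V = t V.

Definition hyperaffine (A : Type) (h : Sec A) : Prop :=
  (forall (B : Type) (b : B), sec_eq (bind h (fun _ => ret b)) (ret b)) /\
  sec_eq (bind h (fun a1 => bind h (fun a2 => ret (a1, a2))))
         (bind h (fun a => ret (a, a))).

Definition hyperaffine_unary : Prop :=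
  forall (A : Type) (t : Sec A), inGamma t ->
    exists tb : Sec A,
      (inGamma tb /\ hyperaffine tb /\
       sec_eq t (bind tb (fun a => then_ t (ret a)))) /\
      forall tb' : Sec A,
        inGamma tb' -> hyperaffine tb' ->
        sec_eq t (bind tb' (fun a => then_ t (ret a))) ->
        sec_eq tb' tb.
End Gamma.

(* A global section [t : C0 -> A . C1] splits [C0] into the disjoint clopen pieces
   [t^*(chi a)] and picks an arrow on each of them.  Replacing every arrow by the
   identity on its source gives [bar t].  A section all of whose arrows are
   identities ([nabla o h = iota]) is hyperaffine, by the unit laws and the
   disjointness of its pieces.  For such an [h], [t = h >>= fun a => t >> return a]
   holds iff [h] and [t] have the same pieces, which gives existence with
   [h = bar t].  Conversely the first hyperaffinity law at [B = 1] says that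
   [nabla o h = iota], so a hyperaffine [h] is determined by its pieces, which gives
   uniqueness. *)

From Stdlib Require Import Classical FunctionalExtensionality PropExtensionality.
Set Implicit Arguments. Unset Strict Implicit.

Section FrameFacts.
Variable L : Frame.
Implicit Types x y z : L.

Lemma le_fsup (S : L -> Prop) x : S x -> fle x (fsup S).
Proof. intro Hx. exact (proj1 (fsup_lub S (fsup S)) (fle_refl _) x Hx). Qed.

Lemma fsup_le (S : L -> Prop) z : (forall x, S x -> fle x z) -> fle (fsup S) z.
Proof. exact (proj2 (fsup_lub S z)). Qed.

Lemma fmeet_lel x y : fle (fmeet x y) x.
Proof. exact (proj1 (proj1 (fmeet_glb x y _) (fle_refl _))). Qed.

Lemma fmeet_ler x y : fle (fmeet x y) y.
Proof. exact (proj2 (proj1 (fmeet_glb x y _) (fle_refl _))). Qed.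

Lemma le_fmeet z x y : fle z x -> fle z y -> fle z (fmeet x y).
Proof. intros; apply fmeet_glb; auto. Qed.

Lemma fmeetC x y : fmeet x y = fmeet y x.
Proof. apply fle_antisym; apply le_fmeet; (apply fmeet_lel || apply fmeet_ler). Qed.

Lemma fmeet_le2 x y x' y' : fle x x' -> fle y y' -> fle (fmeet x y) (fmeet x' y').
Proof.
  intros Hx Hy; apply le_fmeet.
  - exact (fle_trans (fmeet_lel x y) Hx).
  - exact (fle_trans (fmeet_ler x y) Hy).
Qed.

Lemma fmeetCA x y z : fmeet x (fmeet y z) = fmeet y (fmeet x z).
Proof.
  assert (H : forall a b c : L, fle (fmeet a (fmeet b c)) (fmeet b (fmeet a c))).
  { intros a b c. apply le_fmeet.
    - exact (fle_trans (fmeet_ler _ _) (fmeet_lel _ _)).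
    - apply fmeet_le2; [apply fle_refl | apply fmeet_ler]. }
  apply fle_antisym; apply H.
Qed.

Lemma fmeet_idPl x y : fle x y -> fmeet x y = x.
Proof. intro H. apply fle_antisym; [apply fmeet_lel | apply le_fmeet; auto using fle_refl]. Qed.

Lemma eq_fsup (S T : L -> Prop) : (forall z, S z <-> T z) -> fsup S = fsup T.
Proof.
  intro H. f_equal. extensionality z. apply propositional_extensionality. auto.
Qed.

Lemma eq_fsup1 (I : Type) (f g : I -> L) : (forall i, f i = g i) ->
  fsup (fun z => exists i, z = f i) = fsup (fun z => exists i, z = g i).
Proof.
  intro H. apply eq_fsup. intro z; split; intros [i ->]; exists i; [|symmetry]; apply H.
Qed.

Lemma eq_fsup2 (I J : Type) (P : I -> J -> Prop) (f g : I -> J -> L) :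
  (forall i j, P i j -> f i j = g i j) ->
  fsup (fun z => exists i j, P i j /\ z = f i j)
  = fsup (fun z => exists i j, P i j /\ z = g i j).
Proof.
  intro H. apply eq_fsup. intro z; split; intros [i [j [Hij ->]]]; exists i, j;
    (split; [exact Hij | ]); [|symmetry]; exact (H i j Hij).
Qed.

Lemma fmeet_fsup2 (I J : Type) (P : I -> J -> Prop) (f : I -> J -> L) c :
  fmeet c (fsup (fun z => exists i j, P i j /\ z = f i j))
  = fsup (fun z => exists i j, P i j /\ z = fmeet c (f i j)).
Proof.
  rewrite fdistr. apply eq_fsup. intro z; split.
  - intros [s [[i [j [Hij ->]]] ->]]. exists i, j; auto.
  - intros [i [j [Hij ->]]]. exists (f i j). split; [exists i, j|]; auto.
Qed.

Lemma fmeet_fsup_le c (S : L -> Prop) z :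
  (forall s, S s -> fle (fmeet c s) z) -> fle (fmeet c (fsup S)) z.
Proof. intro H. rewrite fdistr. apply fsup_le. intros w [s [Hs ->]]. auto. Qed.

Definition fbot : L := fsup (fun _ => False).

Lemma fbot_le x : fle fbot x.
Proof. apply fsup_le. intros _ []. Qed.

Definition ftruth (P : Prop) : L := fsup (fun z => P /\ z = ftop).

Lemma ftruth_true (P : Prop) : P -> ftruth P = ftop.
Proof. intro HP. apply fle_antisym; [apply ftop_max | apply le_fsup; auto]. Qed.

Lemma ftruth_false (P : Prop) : ~ P -> ftruth P = fbot.
Proof. intro HP. apply eq_fsup. intro z; split; [intros [H _]; contradiction | intros []]. Qed.

Lemma fsup_fmeet_ftruth (I : Type) (f : I -> L) (i0 : I) :
  fsup (fun z => exists i, z = fmeet (f i) (ftruth (i = i0))) = f i0.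
Proof.
  apply fle_antisym.
  - apply fsup_le. intros z [i ->]. destruct (classic (i = i0)) as [-> | Hne].
    + apply fmeet_lel.
    + rewrite ftruth_false by auto. exact (fle_trans (fmeet_ler _ _) (fbot_le _)).
  - apply le_fsup. exists i0. rewrite ftruth_true by reflexivity.
    symmetry. apply fmeet_idPl, ftop_max.
Qed.
End FrameFacts.

Arguments fbot {L}.
Arguments ftruth {L} P.

Lemma img_comp (X Y Z : Type) (f : X -> Y) (g : Y -> Z) (S : X -> Prop) :
  img g (img f S) = img (fun x => g (f x)) S.
Proof.
  extensionality z. apply propositional_extensionality. split.
  - intros [y [[x [Hx ->]] ->]]. exists x; auto.
  - intros [x [Hx ->]]. exists (f x). split; [exists x|]; auto.
Qed.

Section FrameHoms.
Variables (L M : Frame) (f : L -> M).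
Hypothesis f_hom : is_frame_hom f.

Lemma frame_hom_mono x y : fle x y -> fle (f x) (f y).
Proof.
  intro Hxy. destruct f_hom as [_ [f_meet _]].
  rewrite <- (fmeet_idPl Hxy), f_meet. apply fmeet_ler.
Qed.

Lemma frame_hom_fbot : f fbot = fbot.
Proof.
  destruct f_hom as [_ [_ f_sup]]. unfold fbot. rewrite f_sup.
  apply eq_fsup. intro z; split; [intros [x [[] _]] | intros []].
Qed.

Lemma frame_hom_ftruth (P : Prop) : f (ftruth P) = ftruth P.
Proof.
  destruct (classic P) as [HP | HP].
  - rewrite !ftruth_true by auto. apply (proj1 f_hom).
  - rewrite !ftruth_false by auto. apply frame_hom_fbot.
Qed.

Lemma frame_hom_comp (N : Frame) (g : M -> N) :
  is_frame_hom g -> is_frame_hom (fun x => g (f x)).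
Proof.
  destruct f_hom as [f_top [f_meet f_sup]]. intros [g_top [g_meet g_sup]].
  split; [|split].
  - rewrite f_top; exact g_top.
  - intros x y. rewrite f_meet; apply g_meet.
  - intro S. rewrite f_sup, g_sup, img_comp. reflexivity.
Qed.
End FrameHoms.

(* The characteristic family of the summand [a] of the copower [A . L]. *)
Definition chi (A : Type) (L : Frame) (a : A) : A -> L := fun a' => ftruth (a' = a).
Arguments chi {A L} a.

Section PowerFrame.
Variables (A : Type) (L : Frame).

Lemma psup_chi (V : A -> L) :
  V = psup (fun W => exists a, W = pmeet (chi a) (fun _ => V a)).
Proof.
  extensionality a'. unfold psup, pmeet, chi. apply fle_antisym.
  - apply le_fsup. exists (fun b => fmeet (ftruth (b = a')) (V a')).
    split; [exists a'; reflexivity|].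
    rewrite ftruth_true, fmeetC by reflexivity. symmetry. apply fmeet_idPl, ftop_max.
  - apply fsup_le. intros y [W [[a ->] ->]]. destruct (classic (a' = a)) as [-> | Hne].
    + apply fmeet_ler.
    + rewrite ftruth_false by auto. exact (fle_trans (fmeet_lel _ _) (fbot_le _)).
Qed.

Lemma pmeet_chi_neq a1 a2 : a1 <> a2 ->
  pmeet (chi a1) (chi a2) = psup (fun _ : A -> L => False).
Proof.
  intro Hne. extensionality a'. unfold pmeet, psup, chi.
  transitivity (@fbot L).
  - apply fle_antisym; [|apply fbot_le].
    destruct (classic (a' = a1)) as [-> | H1].
    + rewrite (@ftruth_false L (a1 = a2)) by auto. apply fmeet_ler.
    + rewrite (@ftruth_false L (a' = a1)) by auto. apply fmeet_lel.
  - apply eq_fsup. intro z; split; [intros [] | intros [x [[] _]]].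
Qed.
End PowerFrame.

Section PowerHoms.
Variables (A : Type) (L M : Frame) (s : (A -> L) -> M).
Hypothesis s_hom : is_frame_hom_pow s.

(* [A . L] is the disjoint union of [A] copies of [L], so [s] splits along the
   clopen pieces [s (chi a)]. *)
Lemma pow_hom_decomp V :
  s V = fsup (fun z => exists a, z = fmeet (s (chi a)) (s (fun _ => V a))).
Proof.
  destruct s_hom as [_ [s_meet s_sup]].
  rewrite (psup_chi V) at 1. rewrite s_sup. apply eq_fsup. intro z; split.
  - intros [W [[a ->] ->]]. exists a. apply s_meet.
  - intros [a ->]. exists (pmeet (chi a) (fun _ => V a)).
    split; [exists a|]; auto.
Qed.

Lemma pow_hom_chi_disjoint a1 a2 : a1 <> a2 -> fmeet (s (chi a1)) (s (chi a2)) = fbot.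
Proof.
  intro Hne. destruct s_hom as [_ [s_meet s_sup]].
  rewrite <- s_meet, pmeet_chi_neq, s_sup by exact Hne.
  apply eq_fsup. intro z; split; [intros [x [[] _]] | intros []].
Qed.

Lemma pow_hom_chi_localize a (w : A -> M) :
  fmeet (s (chi a)) (fsup (fun z => exists a', z = fmeet (s (chi a')) (w a')))
  = fmeet (s (chi a)) (w a).
Proof.
  apply fle_antisym.
  - apply fmeet_fsup_le. intros z [a' ->]. destruct (classic (a' = a)) as [-> | Hne].
    + apply fmeet_le2; [apply fle_refl | apply fmeet_ler].
    + apply fle_trans with (fmeet (s (chi a)) (s (chi a'))).
      * apply fmeet_le2; [apply fle_refl | apply fmeet_lel].
      * rewrite pow_hom_chi_disjoint by auto. apply fbot_le.
  - apply le_fmeet; [apply fmeet_lel|]. apply le_fsup. exists a. reflexivity.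
Qed.

Lemma pow_hom_const : is_frame_hom (fun v : L => s (fun _ => v)).
Proof.
  destruct s_hom as [s_top [s_meet s_sup]]. split; [exact s_top | split; [intros; apply s_meet|]].
  intro S. rewrite <- img_comp, <- s_sup. f_equal.
  extensionality a. unfold psup. apply eq_fsup. intro z; split.
  - intro Hz. exists (fun _ => z). split; [exists z|]; auto.
  - intros [W [[y [Hy ->]] ->]]. exact Hy.
Qed.

Lemma pow_hom_comp (K : Frame) (f : K -> L) :
  is_frame_hom f -> is_frame_hom_pow (fun V : A -> K => s (fun a => f (V a))).
Proof.
  intros [f_top [f_meet f_sup]]. destruct s_hom as [s_top [s_meet s_sup]].
  split; [|split].
  - rewrite <- s_top. f_equal. extensionality a. apply f_top.
  - intros V W. rewrite <- s_meet. f_equal. extensionality a. apply f_meet.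
  - intro S. rewrite <- img_comp, <- s_sup. f_equal.
    extensionality a. unfold psup. rewrite f_sup. apply eq_fsup. intro z; split.
    + intros [y [[V [HV ->]] ->]]. exists (fun b => f (V b)). split; [exists V|]; auto.
    + intros [W [[V [HV ->]] ->]]. exists (V a). split; [exists V|]; auto.
Qed.
End PowerHoms.

Section LocalicCategory.
Variable C : LocCat.

(* The coordinates of [Y] other than [b0] can be taken maximal, as each [mu (V b)]
   is join-closed in its second variable. *)
Lemma fsup_isoF_coord (X : Frame) (B : Type) (V : B -> C1 C) (b0 : B)
    (p q : C1 C -> X) (F : (B -> C1 C) -> X) :
  (forall x y, fle x y -> fle (q x) (q y)) -> (forall Y, F Y = q (Y b0)) ->
  fsup (fun z => exists x Y, isoF (Bmu V) x Y /\ z = fmeet (p x) (F Y))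
  = fsup (fun z => exists x y, mu C (V b0) x y /\ z = fmeet (p x) (q y)).
Proof.
  intros q_mono HF. apply fle_antisym.
  - apply fsup_le. intros z [x [Y [HE ->]]]. apply le_fsup.
    exists x, (Y b0). rewrite HF. split; [exact (HE b0) | reflexivity].
  - apply fsup_le. intros z [x [y [Hxy ->]]].
    pose (Y := fun b => fsup (fun w => mu C (V b) x w)).
    apply fle_trans with (fmeet (p x) (F Y)).
    + apply fmeet_le2; [apply fle_refl|]. rewrite HF. apply q_mono, le_fsup, Hxy.
    + apply le_fsup. exists x, Y. split; [|reflexivity].
      intro b. destruct (mu_Cideal (V b)) as [_ [_ [mu_sup2 _]]]. apply mu_sup2. auto.
Qed.

(* The left unit law [mu o <iota o sigma, id> = id], precomposed with a section [q] of [sigma]. *)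
Lemma sigma_section_mu (q : C1 C -> C0 C) :
  is_frame_hom q -> (forall w, q (sigma C w) = w) ->
  forall v, q v = fsup (fun z => exists x y, mu C v x y /\ z = fmeet (iota C x) (q y)).
Proof.
  intros [_ [q_meet q_sup]] q_sec v.
  rewrite <- (unit_left v) at 1. unfold pairF. rewrite q_sup. apply eq_fsup. intro z; split.
  - intros [w [[x [y [Hxy ->]]] ->]]. exists x, y. rewrite q_meet, q_sec. auto.
  - intros [x [y [Hxy ->]]]. exists (fmeet (sigma C (iota C x)) y).
    rewrite q_meet, q_sec. split; [exists x, y|]; auto.
Qed.

Lemma bind_ret_map (A B : Type) (s : Sec C A) (g : A -> B) V :
  bind s (fun a => ret (g a)) V = s (fun a => V (g a)).
Proof.
  unfold bind. f_equal. extensionality a.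
  rewrite <- (unit_right (V (g a))).
  exact (fsup_isoF_coord V (fun x => x) (frame_hom_mono (frame_hom_comp (iota_hom C) (tau_hom C)))
           (fun Y => eq_refl)).
Qed.

Lemma iota_midF (A B : Type) (u : A -> Sec C B) E a :
  iota C (midF u E a)
  = fsup (fun z => exists x Y, E x Y /\ z = fmeet (iota C x) (u a Y)).
Proof.
  destruct (iota_hom C) as [_ [iota_meet iota_sup]].
  unfold midF. rewrite iota_sup. apply eq_fsup. intro z; split.
  - intros [w [[x [Y [HE ->]]] ->]]. exists x, Y. rewrite iota_meet, tau_iota. auto.
  - intros [x [Y [HE ->]]]. exists (fmeet x (tau C (u a Y))).
    rewrite iota_meet, tau_iota. split; [exists x, Y|]; auto.
Qed.

(* In locale terms [nabla o h = iota]: every arrow chosen by [h] is an identity. *)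
Definition identity_section (A : Type) (h : Sec C A) : Prop :=
  forall v, h (fun _ => v) = iota C v.

Lemma hyperaffine_identity_section (A : Type) (h : Sec C A) :
  hyperaffine h -> identity_section h.
Proof.
  intros [h_ret _] v. transitivity (ret tt (fun _ : unit => v)); [|reflexivity].
  rewrite <- (h_ret unit tt (fun _ => v)).
  symmetry. exact (bind_ret_map h (fun _ => tt) (fun _ => v)).
Qed.

Section IdentitySection.
Variables (A : Type) (h : Sec C A).
Hypotheses (h_hom : is_frame_hom_pow h) (h_id : identity_section h).

Lemma identity_section_decomp V :
  h V = fsup (fun z => exists a, z = fmeet (h (chi a)) (iota C (V a))).
Proof.
  rewrite (pow_hom_decomp h_hom). apply eq_fsup1. intro a. rewrite h_id. reflexivity.
Qed.

Lemma bind_identity_section (B : Type) (u : A -> Sec C B) V :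
  bind h u V = fsup (fun z => exists a, z = fmeet (h (chi a))
     (fsup (fun w => exists x Y, isoF (Bmu V) x Y /\ w = fmeet (iota C x) (u a Y)))).
Proof.
  unfold bind. rewrite identity_section_decomp.
  apply eq_fsup1. intro a. rewrite iota_midF. reflexivity.
Qed.

Lemma identity_section_bind_ret_const (B : Type) (b : B) :
  sec_eq (bind h (fun _ => ret b)) (ret b).
Proof. intro V. exact (eq_trans (bind_ret_map h (fun _ => b) V) (h_id _)). Qed.

Lemma identity_section_bind_diag :
  sec_eq (bind h (fun a1 => bind h (fun a2 => ret (a1, a2))))
         (bind h (fun a => ret (a, a))).
Proof.
  intro V.
  rewrite (bind_ret_map h (fun a => (a, a))), bind_identity_section, identity_section_decomp.
  apply eq_fsup1. intro a.
  rewrite (sigma_section_mu (iota_hom C) (@sigma_iota C) (V (a, a))).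
  rewrite <- (fsup_isoF_coord V (iota C) (F := fun Y => iota C (Y (a, a)))
                (frame_hom_mono (iota_hom C)) (fun Y => eq_refl)).
  rewrite !fmeet_fsup2. apply eq_fsup2. intros x Y _.
  rewrite fmeetCA, (bind_ret_map h (fun a2 => (a, a2))).
  rewrite (identity_section_decomp (fun a2 => Y (a, a2))), (pow_hom_chi_localize h_hom).
  apply fmeetCA.
Qed.

Lemma identity_section_hyperaffine : hyperaffine h.
Proof.
  split; [exact identity_section_bind_ret_const | exact identity_section_bind_diag].
Qed.

Section Factorization.
Variable t : Sec C A.
Hypothesis t_gamma : inGamma t.

Lemma bind_then_identity_section V :
  bind h (fun a => then_ t (ret a)) V
  = fsup (fun z => exists a, z = fmeet (h (chi a)) (t (fun _ => V a))).
Proof.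
  destruct t_gamma as [t_hom t_sec].
  rewrite bind_identity_section. apply eq_fsup1. intro a. f_equal.
  rewrite (fsup_isoF_coord V (iota C) (F := then_ t (ret a))
             (frame_hom_mono (pow_hom_const t_hom)) (fun Y => bind_ret_map t (fun _ => a) Y)).
  symmetry. exact (sigma_section_mu (pow_hom_const t_hom) t_sec (V a)).
Qed.

Lemma factorization_iff_chi :
  sec_eq t (bind h (fun a => then_ t (ret a))) <-> (forall a, h (chi a) = t (chi a)).
Proof.
  split.
  - intros t_fact a. rewrite t_fact, bind_then_identity_section.
    rewrite <- (fsup_fmeet_ftruth (fun a' => h (chi a')) a).
    apply eq_fsup1. intro a'. f_equal. symmetry.
    exact (frame_hom_ftruth (pow_hom_const (proj1 t_gamma)) (a' = a)).
  - intros h_chi V. rewrite bind_then_identity_section, (pow_hom_decomp (proj1 t_gamma) V).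
    apply eq_fsup1. intro a. rewrite h_chi. reflexivity.
Qed.
End Factorization.
End IdentitySection.

Lemma identity_section_ext (A : Type) (h1 h2 : Sec C A) :
  is_frame_hom_pow h1 -> identity_section h1 ->
  is_frame_hom_pow h2 -> identity_section h2 ->
  (forall a, h1 (chi a) = h2 (chi a)) -> sec_eq h1 h2.
Proof.
  intros h1_hom h1_id h2_hom h2_id h_chi V.
  rewrite (identity_section_decomp h1_hom h1_id), (identity_section_decomp h2_hom h2_id).
  apply eq_fsup1. intro a. rewrite h_chi. reflexivity.
Qed.

(* The frame map of [(A . (iota o sigma)) o t]: each arrow chosen by [t] is
   replaced by the identity on its source. *)
Definition bar (A : Type) (t : Sec C A) : Sec C A :=
  fun V => t (fun a => sigma C (iota C (V a))).

Section Bar.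
Variables (A : Type) (t : Sec C A).
Hypothesis t_gamma : inGamma t.

Lemma bar_hom : is_frame_hom_pow (bar t).
Proof.
  exact (pow_hom_comp (proj1 t_gamma) (frame_hom_comp (iota_hom C) (sigma_hom C))).
Qed.

Lemma bar_identity_section : identity_section (bar t).
Proof. intro v. exact (proj2 t_gamma (iota C v)). Qed.

Lemma bar_inGamma : inGamma (bar t).
Proof.
  split; [exact bar_hom|]. intro w. unfold bar. rewrite sigma_iota. apply (proj2 t_gamma).
Qed.

Lemma bar_chi a : bar t (chi a) = t (chi a).
Proof.
  unfold bar. f_equal. extensionality a'.
  exact (frame_hom_ftruth (frame_hom_comp (iota_hom C) (sigma_hom C)) (a' = a)).
Qed.
End Bar.
End LocalicCategory.

Theorem proposition5p3 (C : LocCat) : hyperaffine_unary C.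
Proof.
  intros A t t_gamma.
  pose proof (bar_hom t_gamma) as bar_hom.
  pose proof (bar_identity_section t_gamma) as bar_id.
  exists (bar t). split; [split; [|split]|].
  - exact (bar_inGamma t_gamma).
  - exact (identity_section_hyperaffine bar_hom bar_id).
  - apply (factorization_iff_chi bar_hom bar_id t_gamma). exact (bar_chi t).
  - intros h [h_hom _] h_hyp h_fact.
    pose proof (hyperaffine_identity_section h_hyp) as h_id.
    apply (identity_section_ext h_hom h_id bar_hom bar_id). intro a.
    rewrite bar_chi. exact (proj1 (factorization_iff_chi h_hom h_id t_gamma) h_fact a).
Qed.
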